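(* Let $k\ge1$, $t\ge 0$ and $n\ge kt$ be integers. Then $S(n,t,k)=k^t$. Moreover, if $F$ is a $t$-admissible $k$-CNF formula on $n$ variables with $|\mathrm{sat}_t(F)|=k^t$, then $F$ contains $t$ pairwise variable-disjoint clauses each of the form $(x_{i_1}\lor\dots\lor x_{i_k})$, i.e. consisting of $k$ distinct un-negated variables.
   Context: A $k$-CNF formula is a conjunction of clauses (disjunctions of literals) each of width at most $k$. $\mathrm{sat}_t(F)$ is the set of satisfying assignments of $F$ of Hamming weight exactly $t$. $F$ is $t$-admissible if it has no satisfying assignment of Hamming weight less than $t$. $S(n,t,k)$ is the maximum of $|\mathrm{sat}_t(F)|$ over all $t$-admissible $k$-CNF formulas $F$ on $n$ variables. *)

From mathcomp Require Import all_boot.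
Set Implicit Arguments. Unset Strict Implicit. Unset Printing Implicit Defensive.

(* A literal over variables x_0..x_{n-1}: (i, true) is x_i, (i, false) is ~x_i. *)
Definition lit (n : nat) := ('I_n * bool)%type.
Definition clause (n : nat) := {set lit n}.
Definition cnf (n : nat) := {set clause n}.
(* An assignment is represented by the set of variables assigned true;
   its Hamming weight is its cardinality. *)
Definition assignment (n : nat) := {set 'I_n}.

Definition lit_sat n (a : assignment n) (l : lit n) : bool := (l.1 \in a) == l.2.
Definition clause_sat n (a : assignment n) (C : clause n) : bool :=
  [exists l in C, lit_sat a l].
Definition cnf_sat n (a : assignment n) (F : cnf n) : bool :=
  [forall C in F, clause_sat a C].

Definition is_kCNF n (k : nat) (F : cnf n) : bool := [forall C in F, #|C| <= k].

Definition sat_t n (t : nat) (F : cnf n) : {set assignment n} :=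
  [set a : assignment n | cnf_sat a F && (#|a| == t)].

Definition admissible n (t : nat) (F : cnf n) : bool :=
  [forall a : assignment n, cnf_sat a F ==> (t <= #|a|)].

Definition S (n t k : nat) : nat :=
  \max_(F : cnf n | admissible t F && is_kCNF k F) #|sat_t t F|.

Definition pos_clause n (V : {set 'I_n}) : clause n := [set (i, true) | i in V].

From mathcomp Require Import all_boot.
Set Implicit Arguments. Unset Strict Implicit. Unset Printing Implicit Defensive.

(** A (t+1)-admissible formula is falsified by the all-false
    assignment, so it has a clause whose at most k variables V all occur
    un-negated, and every satisfying assignment contains some i in V. Deleting
    i gives a weight-t satisfying assignment of F with x_i set to true, which is
    a t-admissible k-CNF; hence |sat_{t+1}(F)| <= |V| k^t <= k^(t+1). The bound
    is attained by t disjoint positive k-clauses. In the equality case every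
    inequality is tight: |V| = k, each assignment meets V exactly once and each
    restriction is tight, so by induction it contains t disjoint positive
    k-clauses avoiding i, which lift to F. They are disjoint from V, for a
    transversal of them through a common variable, extended by i, would be a
    satisfying assignment meeting V twice. *)

Lemma leq_sum_eq (I : finType) (P : pred I) (f g : I -> nat) :
  (forall i, P i -> f i <= g i) -> \sum_(i | P i) g i <= \sum_(i | P i) f i ->
  forall i, P i -> f i = g i.
Proof.
move=> f_le_g sum_le i Pi.
have sum_leqif := leqif_sum (fun j Pj => leqif_eq (f_le_g j Pj)).
move: sum_le; rewrite (geq_leqif sum_leqif) => /forallP /(_ i).
by rewrite Pi => /eqP.
Qed.

Section Restriction.
Variables (n : nat) (i : 'I_n).

Definition restr_true (F : cnf n) : cnf n :=
  [set C :\ (i, false) | C in [set C in F | (i, true) \notin C]].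

Lemma clause_sat_restr (a : assignment n) (C : clause n) :
  (i, true) \notin C -> clause_sat a (C :\ (i, false)) = clause_sat (i |: a) C.
Proof.
move=> iC; apply/existsP/existsP => -[[j b]]; rewrite /lit_sat /= !inE.
  move=> /andP[/andP[ne_l lC] sat_l]; exists (j, b); rewrite lC in_setU1 /=.
  case: (eqVneq j i) => [ji | _] //; subst j.
  by case: b ne_l {sat_l lC} => //; rewrite eqxx.
move=> /andP[lC]; case: (eqVneq j i) => [ji | ne_ji] /= sat_l.
  by subst j; move: sat_l lC => /eqP <-; rewrite (negbTE iC).
by exists (j, b); rewrite !inE lC sat_l !andbT; apply: contraNneq ne_ji => -[->].
Qed.

Lemma cnf_sat_restr (a : assignment n) (F : cnf n) :
  cnf_sat a (restr_true F) = cnf_sat (i |: a) F.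
Proof.
apply/forallP/forallP => satF C.
- apply/implyP => CF; case iC: ((i, true) \in C).
    by apply/existsP; exists (i, true); rewrite iC /lit_sat /= setU11.
  rewrite -clause_sat_restr ?iC //; apply: (implyP (satF _)).
  by apply/imsetP; exists C; rewrite // inE CF iC.
- apply/implyP => /imsetP[C0]; rewrite inE => /andP[C0F iC0] ->.
  by rewrite clause_sat_restr //; apply: (implyP (satF C0)).
Qed.

Lemma kCNF_restr k (F : cnf n) : is_kCNF k F -> is_kCNF k (restr_true F).
Proof.
move=> /forallP kF; apply/forallP => C'; apply/implyP => /imsetP[C].
rewrite inE => /andP[CF _] ->; apply: leq_trans (implyP (kF C) CF).
exact/subset_leq_card/subsetDl.
Qed.

Lemma admissible_restr t (F : cnf n) : admissible t.+1 F -> admissible t (restr_true F).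
Proof.
move=> /forallP admF; apply/forallP => a; apply/implyP.
rewrite cnf_sat_restr => /(implyP (admF _)); rewrite cardsU1.
by case: (i \in a) => /= [/ltnW | ].
Qed.

(* Deleting x_i is injective on the assignments containing it. *)
Lemma card_sat_restr t (F : cnf n) :
  #|[set a in sat_t t.+1 F | i \in a]| <= #|sat_t t (restr_true F)|.
Proof.
rewrite -(@card_in_imset _ _ (fun a => a :\ i)); last first.
  by move=> a b; rewrite !inE => /andP[_ ia] /andP[_ ib] eq_ab;
    rewrite -(setD1K ia) -(setD1K ib) eq_ab.
apply/subset_leq_card/subsetP => b /imsetP[a]; rewrite !inE.
move=> /andP[/andP[satF /eqP card_a] ia] ->; rewrite cnf_sat_restr setD1K //.
by move: card_a; rewrite satF (cardsD1 i) ia add1n => -[->] /=.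
Qed.

End Restriction.

Lemma card_set_in_sum (T : finType) (A : {set T}) (P : pred T) :
  #|[set x in A | P x]| = \sum_(x in A) P x.
Proof.
rewrite -sum1_card big_mkcond [RHS]big_mkcond; apply: eq_bigr => x _.
by rewrite inE; case: (x \in A); case: (P x).
Qed.

Section PositiveClauses.
Variable n : nat.
Implicit Types (a V : {set 'I_n}) (C : clause n) (F : cnf n).

Definition clause_vars C : {set 'I_n} := [set l.1 | l in C].

Lemma clause_sat_pos a V : clause_sat a (pos_clause V) = (a :&: V != set0).
Proof.
apply/existsP/set0Pn => [[_ /andP[/imsetP[x xV ->] /eqP xa]] | [x]].
  by exists x; rewrite inE xa.
by rewrite inE => /andP[xa xV]; exists (x, true); rewrite /lit_sat xa andbT imset_f.
Qed.

Lemma card_pos_clause V : #|pos_clause V| = #|V|.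
Proof. by rewrite card_imset // => x y [->]. Qed.

Lemma unsat0_lit_pos C l : ~~ clause_sat set0 C -> l \in C -> l.2.
Proof.
by move=> /existsPn/(_ l); rewrite /lit_sat inE; case: l.2; rewrite ?andbT // => /negP.
Qed.

Lemma pos_clause_vars C : ~~ clause_sat set0 C -> pos_clause (clause_vars C) = C.
Proof.
move=> unsat; apply/setP => -[x b]; apply/imsetP/idP => [[_ /imsetP[l lC ->] [-> ->]] | xbC].
  by case: l lC (unsat0_lit_pos unsat lC) => ? [].
by exists x; [apply/imsetP; exists (x, b) | have /= -> := unsat0_lit_pos unsat xbC].
Qed.

Lemma kCNF_clause_vars k F C : is_kCNF k F -> C \in F -> #|clause_vars C| <= k.
Proof. by move=> /forallP/(_ C)/implyP kC /kC; apply: leq_trans (leq_imset_card _ _). Qed.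

Lemma admissible_unsat0_clause t F :
  admissible t.+1 F -> exists2 C, C \in F & ~~ clause_sat set0 C.
Proof.
move=> /forallP/(_ set0); rewrite cards0 implybF => /forallPn[C].
by rewrite negb_imply => /andP[]; exists C.
Qed.

Lemma sat_meets_clause_vars t F C a :
  C \in F -> ~~ clause_sat set0 C -> a \in sat_t t F -> a :&: clause_vars C != set0.
Proof.
move=> CF unsat; rewrite inE -clause_sat_pos pos_clause_vars // => /andP[satF _].
exact: (implyP (forallP satF C)).
Qed.

Lemma sum_card_meet t F V :
  \sum_(a in sat_t t F) #|a :&: V| = \sum_(i in V) #|[set a in sat_t t F | i \in a]|.
Proof.
have meetE a : a :&: V = [set i in V | i \in a].
  by apply/setP => i; rewrite !inE andbC.
under eq_bigr => a _ do rewrite meetE card_set_in_sum.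
by rewrite exchange_big; apply: eq_bigr => i _; rewrite card_set_in_sum.
Qed.

End PositiveClauses.

Section UpperBound.
Variable n : nat.
Implicit Types (F : cnf n) (C : clause n).

Lemma card_sat_vars_le t F C : C \in F -> ~~ clause_sat set0 C ->
  #|sat_t t F| <= \sum_(i in clause_vars C) #|[set a in sat_t t F | i \in a]|.
Proof.
move=> CF unsat; rewrite -sum_card_meet -sum1_card; apply: leq_sum => a satF.
by rewrite card_gt0 (sat_meets_clause_vars CF unsat satF).
Qed.

Lemma card_sat_t_le k t F : is_kCNF k F -> admissible t F -> #|sat_t t F| <= k ^ t.
Proof.
elim: t F => [|t IH] F kF admF.
  rewrite expn0 -(cards1 (set0 : assignment n)); apply/subset_leq_card/subsetP => a.
  by rewrite !inE => /andP[_ /eqP/cards0_eq ->].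
have [C CF unsat] := admissible_unsat0_clause admF.
have with_le i : #|[set a in sat_t t.+1 F | i \in a]| <= k ^ t.
  exact: leq_trans (card_sat_restr i t F) (IH _ (kCNF_restr i kF) (admissible_restr i admF)).
apply: leq_trans (card_sat_vars_le t.+1 CF unsat) _.
apply: (@leq_trans (\sum_(i in clause_vars C) k ^ t)); first exact: leq_sum.
by rewrite sum_nat_const expnS leq_mul2r (kCNF_clause_vars kF CF) orbT.
Qed.

Lemma tight_clause k t F C : 0 < k -> is_kCNF k F -> admissible t.+1 F ->
    #|sat_t t.+1 F| = k ^ t.+1 -> C \in F -> ~~ clause_sat set0 C ->
  [/\ #|clause_vars C| = k,
      forall a, a \in sat_t t.+1 F -> #|a :&: clause_vars C| = 1 &
      forall i, i \in clause_vars C -> #|sat_t t (restr_true i F)| = k ^ t].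
Proof.
move=> k_gt0 kF admF tightF CF unsat; set V := clause_vars C; set s := sat_t t.+1 F.
have restr_le i : #|sat_t t (restr_true i F)| <= k ^ t.
  exact: card_sat_t_le (kCNF_restr i kF) (admissible_restr i admF).
have with_le i : #|[set a in s | i \in a]| <= k ^ t.
  exact: leq_trans (card_sat_restr i t F) (restr_le i).
have V_eq : #|V| = k.
  apply/eqP; rewrite eqn_leq (kCNF_clause_vars kF CF) /=.
  rewrite -(@leq_pmul2r (k ^ t)) ?expn_gt0 ?k_gt0 //.
  rewrite -expnS -tightF; apply: leq_trans (card_sat_vars_le t.+1 CF unsat) _.
  by rewrite -sum_nat_const; apply: leq_sum => i _.
have with_eq : forall i, i \in V -> #|[set a in s | i \in a]| = k ^ t.
  apply: leq_sum_eq => [i _ | ]; first exact: with_le.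
  by rewrite sum_nat_const V_eq -expnS -tightF card_sat_vars_le.
split => // [a | i iV].
- suff meet_eq1 : forall a, a \in s -> 1 = #|a :&: V| by move/meet_eq1.
  apply: leq_sum_eq => [{}a sat_a | ].
    by rewrite card_gt0 (sat_meets_clause_vars CF unsat sat_a).
  rewrite sum1_card sum_card_meet (eq_bigr (fun=> k ^ t) with_eq).
  by rewrite sum_nat_const V_eq -expnS tightF.
- by apply/eqP; rewrite eqn_leq restr_le -(with_eq i iV) card_sat_restr.
Qed.

End UpperBound.

Section DisjointFamilies.
Variable n : nat.
Implicit Types (a b D : {set 'I_n}) (W : {set {set 'I_n}}).

Lemma leq_card_hitting (I : finType) (P : {set I}) (V : I -> {set 'I_n}) a :
    (forall j j', j \in P -> j' \in P -> j != j' -> [disjoint V j & V j']) ->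
    (forall j, j \in P -> a :&: V j != set0) ->
  #|P| <= #|a|.
Proof.
move=> disjV hitV; pose f j := [pick x in a :&: V j].
have fP j : j \in P -> exists2 x, f j = Some x & x \in a :&: V j.
  move=> jP; rewrite /f; case: pickP => [x | none]; first by exists x.
  by case/set0Pn: (hitV j jP) => x; rewrite none.
have f_inj : {in P &, injective f}.
  move=> j j' jP j'P eq_f; apply/eqP; apply: contraT => /(disjV j j' jP j'P) disj.
  have [x fj /setIP[_ xVj]] := fP j jP; have [x' fj' /setIP[_ xVj']] := fP j' j'P.
  move: eq_f; rewrite fj fj' => -[eq_x]; rewrite -eq_x in xVj'.
  by rewrite (disjointFr disj xVj) in xVj'.
rewrite -(card_in_imset f_inj) -(card_imset a (@Some_inj _)).
apply/subset_leq_card/subsetP => _ /imsetP[j jP ->].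
by have [x -> /setIP[xa _]] := fP j jP; apply: imset_f.
Qed.

Lemma exists_transversal W D x : trivIset W -> set0 \notin W -> D \in W -> x \in D ->
  exists b, [/\ x \in b, b \subset cover W, #|b| = #|W|
               & forall D', D' \in W -> b :&: D' != set0].
Proof.
move=> /trivIsetP disjW W_ne0 DW xD.
pose h D' := if x \in D' then x else odflt x [pick y in D'].
have hW D' : D' \in W -> h D' \in D'.
  move=> D'W; rewrite /h; case: ifP => // _; case: pickP => [y | none] //=.
  have /set0Pn[y yD'] : D' != set0 by apply: contraNneq W_ne0 => <-.
  by have := none y; rewrite /= yD'.
exists (h @: W); split.
- by apply/imsetP; exists D; rewrite // /h xD.
- by apply/subsetP => _ /imsetP[D' D'W ->]; apply/bigcupP; exists D'; rewrite ?hW.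
- apply: card_in_imset => D1 D2 D1W D2W eq_h; apply/eqP.
  apply: contraT => /(disjW _ _ D1W D2W) disj.
  by have := disjointFr disj (hW _ D1W); rewrite eq_h hW.
- by move=> D' D'W; apply/set0Pn; exists (h D'); rewrite inE imset_f ?hW.
Qed.

Lemma pos_family_sat t W b :
  #|b| = t -> (forall D, D \in W -> b :&: D != set0) ->
  b \in sat_t t [set pos_clause D | D in W].
Proof.
move=> card_b hit_b; rewrite inE card_b eqxx andbT; apply/forallP => C.
by apply/implyP => /imsetP[D DW ->]; rewrite clause_sat_pos hit_b.
Qed.

Lemma admissible_pos_family W :
  trivIset W -> admissible #|W| [set pos_clause D | D in W].
Proof.
move=> /trivIsetP disjW; apply/forallP => a; apply/implyP => /forallP satW.
apply: (@leq_card_hitting _ W id) => // D DW.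
by rewrite -clause_sat_pos; apply: (implyP (satW _)); apply: imset_f.
Qed.

(* The positive clauses of W alone form a t-admissible k-CNF, whose at most
   k^t weight-t satisfying assignments include those of G; so a tight G has
   exactly the transversals of W. *)
Lemma tight_transversal_sat k t (G : cnf n) W b :
    trivIset W -> #|W| = t -> (forall D, D \in W -> #|D| <= k /\ pos_clause D \in G) ->
    #|sat_t t G| = k ^ t ->
  #|b| = t -> (forall D, D \in W -> b :&: D != set0) -> b \in sat_t t G.
Proof.
move=> disjW card_W clausesW tightG card_b hit_b.
set G' := [set pos_clause D | D in W].
have kG' : is_kCNF k G'.
  apply/forallP => C; apply/implyP => /imsetP[D DW ->].
  by rewrite card_pos_clause (clausesW D DW).1.
have subG : sat_t t G \subset sat_t t G'.
  apply/subsetP => a; rewrite !inE => /andP[/forallP satG ->]; rewrite andbT.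
  apply/forallP => C; apply/implyP => /imsetP[D DW ->].
  exact: (implyP (satG _) (clausesW D DW).2).
have -> : sat_t t G = sat_t t G'.
  apply/eqP; rewrite eqEcard subG tightG card_sat_t_le //.
  by rewrite -card_W admissible_pos_family.
exact: pos_family_sat.
Qed.

End DisjointFamilies.

Section TightFormulas.
Variable n : nat.
Implicit Types (F : cnf n) (V D : {set 'I_n}) (W : {set {set 'I_n}}).

Lemma lift_pos_clause k F i D :
    is_kCNF k F -> #|D| = k -> pos_clause D \in restr_true i F ->
  pos_clause D \in F /\ i \notin D.
Proof.
move=> kF card_D /imsetP[C]; rewrite inE => /andP[CF iC] eqD.
have iD : i \notin D.
  apply: contra iC => iD; have : (i, true) \in pos_clause D by apply: imset_f.
  by rewrite eqD => /setD1P[].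
split=> //; rewrite eqD.
have iC' : (i, false) \notin C.
  apply/negP => iFC; have := implyP (forallP kF C) CF.
  by rewrite (cardsD1 (i, false)) iFC -eqD card_pos_clause card_D add1n ltnn.
by have -> : C :\ (i, false) = C by apply/setDidPl; rewrite disjoint_sym disjoints1.
Qed.

Lemma clause_vars_disjoint_family t F V i W :
    i \in V -> (forall a, a \in sat_t t.+1 F -> #|a :&: V| = 1) ->
    trivIset W -> set0 \notin W -> #|W| = t -> i \notin cover W ->
    (forall b : {set 'I_n}, #|b| = t -> (forall D, D \in W -> b :&: D != set0) ->
       b \in sat_t t (restr_true i F)) ->
  [disjoint V & cover W].
Proof.
move=> iV meet1 disjW W_ne0 card_W i_cover transversal_sat.
rewrite -setI_eq0; apply/set0Pn => -[x /setIP[xV /bigcupP[D DW xD]]].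
have [b [xb b_cover card_b hit_b]] := exists_transversal disjW W_ne0 DW xD.
have ib : i \notin b by apply: contra i_cover; apply: (subsetP b_cover).
have sat_ib : i |: b \in sat_t t.+1 F.
  move: (transversal_sat b (etrans card_b card_W) hit_b).
  by rewrite !inE cnf_sat_restr cardsU1 ib.
have xi : x != i by apply: contraNneq i_cover => <-; apply/bigcupP; exists D.
have : #|[set i; x]| <= #|(i |: b) :&: V|.
  by apply/subset_leq_card/subsetP => y /set2P[] ->; rewrite !inE ?eqxx ?xb ?iV ?xV ?orbT.
by rewrite meet1 // cards2 eq_sym xi.
Qed.

Lemma tight_family k t F :
    0 < k -> is_kCNF k F -> admissible t F -> #|sat_t t F| = k ^ t ->
  exists W, [/\ #|W| = t, trivIset W & forall D, D \in W -> #|D| = k /\ pos_clause D \in F].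
Proof.
move=> k_gt0; elim: t F => [|t IH] F kF admF tightF.
  exists set0; split=> [|| D]; rewrite ?inE ?cards0 //.
  by rewrite /trivIset /cover !big_set0 cards0.
have [C CF unsat] := admissible_unsat0_clause admF.
have [card_V meet1 tight_restr] := tight_clause k_gt0 kF admF tightF CF unsat.
set V := clause_vars C in card_V meet1 tight_restr.
have /set0Pn[i iV] : V != set0 by rewrite -card_gt0 card_V.
have [W [card_W disjW clausesW]] :=
  IH _ (kCNF_restr i kF) (admissible_restr i admF) (tight_restr i iV).
have liftW D : D \in W -> pos_clause D \in F /\ i \notin D.
  by move=> DW; have [card_D DF] := clausesW D DW; apply: lift_pos_clause kF card_D DF.
have W_ne0 : set0 \notin W.
  by apply/negP => /clausesW[]; rewrite cards0 => k0; rewrite -k0 in k_gt0.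
have i_cover : i \notin cover W by apply/bigcupP => -[D /liftW[_ /negP]].
have disjV : [disjoint V & cover W].
  apply: (clause_vars_disjoint_family iV meet1 disjW W_ne0 card_W i_cover) => b.
  apply: tight_transversal_sat disjW card_W _ (tight_restr i iV) => D DW.
  by have [-> ->] := clausesW D DW.
have [disjVW V_notin] :=
  trivIsetU1 (fun D DW => disjointWr (bigcup_sup D DW) disjV) disjW W_ne0.
exists (V |: W); split => //; first by rewrite cardsU1 V_notin card_W.
move=> D /setU1P[-> | DW]; first by rewrite card_V pos_clause_vars.
by split; [exact: (clausesW D DW).1 | exact: (liftW D DW).1].
Qed.

End TightFormulas.

Section BlockFormula.
Variables (k t n : nat) (hn : k * t <= n).

Let card_grid_le : #|{: 'I_t * 'I_k}| <= n.
Proof. by rewrite card_prod !card_ord mulnC. Qed.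

Definition grid_var (p : 'I_t * 'I_k) : 'I_n := widen_ord card_grid_le (enum_rank p).

Lemma grid_var_inj : injective grid_var.
Proof. by move=> p q /(congr1 val) /= /val_inj /enum_rank_inj. Qed.

Definition block (j : 'I_t) : {set 'I_n} := [set grid_var (j, r) | r : 'I_k].

Definition block_cnf : cnf n := [set pos_clause (block j) | j : 'I_t].

Definition grid_assignment (f : {ffun 'I_t -> 'I_k}) : assignment n :=
  [set grid_var (j, f j) | j : 'I_t].

Lemma disjoint_block j j' : j != j' -> [disjoint block j & block j'].
Proof.
move=> ne_jj'; rewrite -setI_eq0; apply/set0Pn => -[_ /setIP[/imsetP[r _ ->]]].
by case/imsetP => r' _ /grid_var_inj[eq_j _]; rewrite eq_j eqxx in ne_jj'.
Qed.

Lemma kCNF_block_cnf : is_kCNF k block_cnf.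
Proof.
apply/forallP => C; apply/implyP => /imsetP[j _ ->].
by rewrite card_pos_clause; apply: leq_trans (leq_imset_card _ _) _; rewrite card_ord.
Qed.

Lemma admissible_block_cnf : admissible t block_cnf.
Proof.
apply/forallP => a; apply/implyP => /forallP sat_a; rewrite -[t]card_ord -cardsT.
apply: (@leq_card_hitting _ _ setT block) => [j j' _ _ | j _]; first exact: disjoint_block.
by rewrite -clause_sat_pos; apply: (implyP (sat_a _)); apply: imset_f.
Qed.

Lemma grid_assignment_sat f : grid_assignment f \in sat_t t block_cnf.
Proof.
rewrite inE card_imset => [|j j' /grid_var_inj[] //]; rewrite card_ord eqxx andbT.
apply/forallP => C; apply/implyP => /imsetP[j _ ->]; rewrite clause_sat_pos.
by apply/set0Pn; exists (grid_var (j, f j)); rewrite inE; apply/andP; split;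
  apply/imsetP; [exists j | exists (f j)].
Qed.

Lemma grid_assignment_inj : injective grid_assignment.
Proof.
move=> f f' eq_f; apply/ffunP => j.
have : grid_var (j, f j) \in grid_assignment f' by rewrite -eq_f; apply/imsetP; exists j.
by case/imsetP => j' _ /grid_var_inj[-> ->].
Qed.

Lemma card_sat_block_cnf : k ^ t <= #|sat_t t block_cnf|.
Proof.
have card_grid : #|grid_assignment @: setT| = k ^ t.
  by rewrite (card_imset _ grid_assignment_inj) cardsT card_ffun !card_ord.
rewrite -card_grid.
by apply/subset_leq_card/subsetP => _ /imsetP[f _ ->]; apply: grid_assignment_sat.
Qed.

End BlockFormula.

Theorem theorem1 (k t n : nat) (hk : 1 <= k) (hn : k * t <= n) :
  S n t k = k ^ t /\
  (forall F : cnf n, is_kCNF k F -> admissible t F -> #|sat_t t F| = k ^ t ->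
     exists V : 'I_t -> {set 'I_n},
       (forall j, #|V j| = k /\ pos_clause (V j) \in F) /\
       (forall j j', j != j' -> [disjoint V j & V j'])).
Proof.
split.
  apply/eqP; rewrite eqn_leq; apply/andP; split.
    by apply/bigmax_leqP => F /andP[admF kF]; apply: card_sat_t_le.
  apply: leq_trans (card_sat_block_cnf hn) _.
  by apply: leq_bigmax_cond; rewrite admissible_block_cnf kCNF_block_cnf.
move=> F kF admF tightF.
have [W [card_W /trivIsetP disjW clausesW]] := tight_family hk kF admF tightF.
pose V j := enum_val (cast_ord (esym card_W) j).
exists V; split=> [j | j j' ne_jj']; first exact/clausesW/enum_valP.
apply: disjW; rewrite ?enum_valP //.
by apply: contra ne_jj' => /eqP/enum_val_inj/cast_ord_inj ->.
Qed.
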